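(* Let $q, q'\in\mathbb{N}_+$, and fix $p,n,\sigma,\vec u,W_i,\mathcal{L}_+,R$ as in the context. Then there exists $\varepsilon_0>0$ such that for every $\varepsilon$ with $0<\varepsilon<\varepsilon_0$, $\varepsilon<\frac{R-p}{2}$ and $\varepsilon^q<\frac{p^q(R^q-p^q)}{((n-1)(p-1)+1)^q}$, every basis $[\vec b_1,\dots,\vec b_n]$ of the lattice $\tilde{\mathcal{L}}=\tilde{\mathcal{L}}(\varepsilon)$ that minimizes $\sum_{i=1}^n\|\vec b_i\|_q^{q'}$ over all bases of $\tilde{\mathcal{L}}$ does not contain $\pm\vec v_1$, the shortest nonzero vector of $\tilde{\mathcal{L}}$.
   Context: Let $p\ge7$ be prime, $n\ge2$, $\sigma\in\{2,3\}^{n-1}$ with $\sum_{i=1}^{n-1}\sigma_i^q=p^q-1$ and $\|k\sigma\bmod p\|_q>\|\sigma\bmod p\|_q$ for all integers $k\not\equiv0,\pm1\pmod p$, where $|\alpha|_p=\min_{z\in\mathbb{Z}}|\alpha-zp|$ and $\|\vec x\bmod p\|_q=(\sum_i|x_i|_p^q)^{1/q}$; if $q\ge2$ assume $4n-3>2p$. Put $\vec u=(1,\sigma)\in\mathbb{R}^n$, $W_i=p\vec e_i$, $\mathcal{L}_+=\operatorname{span}_{\mathbb{Z}}(W_1,\dots,W_n,\vec u)$, and fix $R>p$ with $\mathcal{L}_+\cap\mathcal{B}_q(R)=\{\vec0,\pm W_1,\dots,\pm W_n,\pm\vec u\}$, where $\mathcal{B}_q(r)=\{\vec x:\|\vec x\|_q<r\}$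 and $\|\vec x\|_q=(\sum_i|x_i|^q)^{1/q}$. For $\varepsilon>0$, in $\mathbb{R}^{n+1}$ let $\vec v_1=(W_1,\varepsilon)$, $\vec v_i=(W_i,2\varepsilon)$ for $2\le i\le n$, $\tilde{\vec u}=\frac1p\sum_{i=1}^nu_i\vec v_i$, and $\tilde{\mathcal{L}}(\varepsilon)=\operatorname{span}_{\mathbb{Z}}(\vec v_1,\dots,\vec v_n,\tilde{\vec u})$. *)

From HB Require Import structures.
From mathcomp Require Import all_boot all_order all_algebra.
From mathcomp Require Import reals exp.
Import Order.TTheory GRing.Theory Num.Theory.
Local Open Scope ring_scope.

(* |a|_p = min_{z in Z} |a - z p|, for an integer a and p > 0:
   with r = a mod p in [0,p), this minimum is min(r, p - r). *)
Definition absp (p : nat) (a : int) : nat :=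
  let r := `|(a %% p%:Z)%Z|%N in minn r (p - r).

Definition lqnorm_modp (R : realType) (q p : nat) (k : nat) (x : 'I_k -> int) : R :=
  powR (\sum_(i < k) ((absp p (x i))%:R ^+ q)) (q%:R^-1).

Definition lqnorm (R : realType) (q : nat) (d : nat) (x : 'rV[R]_d) : R :=
  powR (\sum_(i < d) `|x 0 i| ^+ q) (q%:R^-1).

Definition Zspan (R : realType) (d : nat) (I : finType) (g : I -> 'rV[R]_d)
  (x : 'rV[R]_d) : Prop :=
  exists c : I -> int, x = \sum_(i : I) g i *~ c i.

Definition lattice_basis (R : realType) (d k : nat) (L : 'rV[R]_d -> Prop)
  (b : 'I_k -> 'rV[R]_d) : Prop :=
  (forall c : 'I_k -> R, \sum_(i < k) c i *: b i = 0 -> forall i, c i = 0)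
  /\ (forall x, Zspan R d 'I_k b x <-> L x).

Definition Wvec (R : realType) (n p : nat) (i : 'I_n) : 'rV[R]_n :=
  \row_(j < n) (if j == i then p%:R else 0).

Definition uvec (R : realType) (m : nat) (sigma : 'I_m -> nat) : 'rV[R]_m.+1 :=
  \row_(j < m.+1) (if unlift ord0 j is Some j' then (sigma j')%:R else 1).

Definition Lplus_gen (R : realType) (m p : nat) (sigma : 'I_m -> nat)
  (o : option 'I_m.+1) : 'rV[R]_m.+1 :=
  if o is Some i then Wvec R m.+1 p i else uvec R m sigma.

Definition ext_vec (R : realType) (n : nat) (x : 'rV[R]_n) (t : R) : 'rV[R]_(n + 1) :=
  row_mx x (\row_(j < 1) t).

Definition vvec (R : realType) (m p : nat) (eps : R) (i : 'I_m.+1) : 'rV[R]_(m.+1 + 1) :=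
  ext_vec R m.+1 (Wvec R m.+1 p i) ((if val i == 0%N then 1 else 2) * eps).

Definition utilde (R : realType) (m p : nat) (sigma : 'I_m -> nat) (eps : R)
  : 'rV[R]_(m.+1 + 1) :=
  (p%:R)^-1 *: \sum_(i < m.+1) (uvec R m sigma 0 i) *: vvec R m p eps i.

Definition Ltilde_gen (R : realType) (m p : nat) (sigma : 'I_m -> nat) (eps : R)
  (o : option 'I_m.+1) : 'rV[R]_(m.+1 + 1) :=
  if o is Some i then vvec R m p eps i else utilde R m p sigma eps.

From mathcomp Require Import all_boot all_order all_algebra.
From mathcomp Require Import reals exp.
From mathcomp Require Import ring lra zify.
Import Order.TTheory GRing.Theory Num.Theory.

Set Implicit Arguments.
Unset Strict Implicit.
Unset Printing Implicit Defensive.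

Local Open Scope ring_scope.

(* L~(eps) is the image of L_+ under the injective linear map y |-> (y, eps * tilt y), where
   tilt y = (y_1 + 2 (y_2 + ... + y_n)) / p; this map adds |eps * tilt y|^q to ||y||_q^q, so the
   bases of L~(eps) are the images of the bases of L_+.  The only nonzero vectors of L_+ of norm
   below R are +-W_i and +-u, all of q-norm p and with |tilt| >= 1 = tilt W_1; hence v_1 is a
   shortest vector.  A basis of L_+ made of such short vectors uses n of these n + 1 generators
   and cannot omit u or any W_k with k >= 2, so it does not contain +-W_1.  Therefore a basis of
   L~(eps) containing +-v_1 has a vector of norm >= R and costs at least R^q' + (n-1) p^q',
   while the image of the basis {u, W_2, ..., W_n} costs less once eps is small enough. *)

Lemma lerXnD (R : realDomainType) (n : nat) (a b : R) :
  (0 < n)%N -> 0 <= a -> 0 <= b -> a ^+ n + b ^+ n <= (a + b) ^+ n.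
Proof.
move=> n_gt0 a_ge0 b_ge0; rewrite -(prednK n_gt0) !exprS mulrDl.
have ab_ge0 : 0 <= a + b by rewrite addr_ge0.
by apply: lerD; apply: ler_wpM2l => //; apply: lerXn2r; rewrite ?nnegrE ?lerDl ?lerDr.
Qed.

Lemma sum_exprn_ge (R : realDomainType) (n k : nat) (x : 'I_n.+1 -> R) (a A : R)
    (j : 'I_n.+1) :
  0 <= a -> (forall i, a <= x i) -> A <= x j -> 0 <= A ->
  A ^+ k + a ^+ k *+ n <= \sum_i x i ^+ k.
Proof.
move=> a_ge0 a_le A_le A_ge0; rewrite (bigD1 j) //=; apply: lerD.
  by apply: lerXn2r; rewrite ?nnegrE // (le_trans A_ge0).
have -> : a ^+ k *+ n = \sum_(i | i != j) a ^+ k by rewrite sumr_const cardC1 card_ord.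
by apply: ler_sum => i _; apply: lerXn2r; rewrite ?nnegrE // (le_trans a_ge0).
Qed.

Lemma small_perturbation (R : realFieldType) (n : nat) (a Y H : R) :
  (0 < n)%N -> 0 <= a -> a < Y -> 0 < H ->
  exists2 e0, 0 < e0 &
    forall e h, 0 < e -> e < e0 -> `|h| <= H -> a ^+ n + `|e * h| ^+ n < Y ^+ n.
Proof.
move=> n_gt0 a_ge0 aY H_gt0; pose gap := Y ^+ n - a ^+ n.
have gap_gt0 : 0 < gap by rewrite subr_gt0 ltr_pXn2r ?nnegrE // (le_trans a_ge0) ?ltW.
exists (Num.min 1 (gap / H ^+ n)) => [|e h e_gt0].
  by rewrite lt_min ltr01 divr_gt0 ?exprn_gt0.
rewrite lt_min => /andP[e_lt1 e_lt] hH.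
have eh_le : `|e * h| ^+ n <= e * H ^+ n.
  rewrite normrM gtr0_norm // exprMn.
  apply: ler_pM; rewrite ?exprn_ge0 //; first exact: ltW.
    exact: ler_iXnr n_gt0 (ltW e_gt0) (ltW e_lt1).
  by apply: lerXn2r; rewrite ?nnegrE ?normr_ge0 // ltW.
have : e * H ^+ n < gap by rewrite -ltr_pdivlMr ?exprn_gt0.
rewrite /gap; lra.
Qed.

Section RealPowers.
Variable R : realType.

Lemma powR_invnK (n : nat) (s : R) : (0 < n)%N -> 0 <= s -> (s `^ n%:R^-1) ^+ n = s.
Proof.
move=> n_gt0 s_ge0; rewrite -powR_mulrn ?powR_ge0 // -powRrM mulVf ?powRr1 //.
by rewrite pnatr_eq0 -lt0n.
Qed.

Lemma exprnK_powR (n : nat) (a : R) : (0 < n)%N -> 0 <= a -> (a ^+ n) `^ n%:R^-1 = a.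
Proof.
move=> n_gt0 a_ge0; rewrite -powR_mulrn // -powRrM mulfV ?powRr1 //.
by rewrite pnatr_eq0 -lt0n.
Qed.

Lemma powR_invn_lt (n : nat) (s r : R) : (0 < n)%N -> 0 <= s -> 0 <= r ->
  (s `^ n%:R^-1 < r) = (s < r ^+ n).
Proof.
move=> n_gt0 s_ge0 r_ge0.
by rewrite -[X in _ = (X < _)](powR_invnK n_gt0 s_ge0) ltr_pXn2r ?nnegrE ?powR_ge0.
Qed.

Lemma ler_powR_invn (n : nat) (s s' : R) : 0 <= s -> s <= s' ->
  s `^ n%:R^-1 <= s' `^ n%:R^-1.
Proof.
move=> s_ge0 ss'; apply: ge0_ler_powR; rewrite ?invr_ge0 ?ler0n ?nnegrE //.
exact: le_trans ss'.
Qed.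

End RealPowers.

Section LqSum.
Variables (R : realType) (q : nat).

Definition lqsum (d : nat) (x : 'rV[R]_d) : R := \sum_i `|x 0 i| ^+ q.

Lemma lqnormE d (x : 'rV[R]_d) : lqnorm R q d x = lqsum x `^ q%:R^-1.
Proof. by []. Qed.

Lemma lqsum_ge0 d (x : 'rV[R]_d) : 0 <= lqsum x.
Proof. by apply: sumr_ge0 => i _; rewrite exprn_ge0. Qed.

Lemma lqsumN d (x : 'rV[R]_d) : lqsum (- x) = lqsum x.
Proof. by apply: eq_bigr => i _; rewrite mxE normrN. Qed.

Lemma lqsum_ext d (x : 'rV[R]_d) (t : R) : lqsum (ext_vec R d x t) = lqsum x + `|t| ^+ q.
Proof.
rewrite /lqsum big_split_ord big_ord1 /ext_vec row_mxEr mxE; congr (_ + _).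
by apply: eq_bigr => i _; rewrite row_mxEl.
Qed.

Lemma lqnorm_ge0 d (x : 'rV[R]_d) : 0 <= lqnorm R q d x.
Proof. exact: powR_ge0. Qed.

Lemma ler_lqnorm d d' (x : 'rV[R]_d) (y : 'rV[R]_d') :
  lqsum x <= lqsum y -> lqnorm R q d x <= lqnorm R q d' y.
Proof. exact/ler_powR_invn/lqsum_ge0. Qed.

Hypothesis q_gt0 : (0 < q)%N.

Lemma lqnorm_lt d (x : 'rV[R]_d) r : 0 <= r -> (lqnorm R q d x < r) = (lqsum x < r ^+ q).
Proof. by move=> r_ge0; rewrite lqnormE powR_invn_lt ?lqsum_ge0. Qed.

Lemma lqnorm_ge d (x : 'rV[R]_d) r : 0 <= r -> (r <= lqnorm R q d x) = (r ^+ q <= lqsum x).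
Proof. by move=> r_ge0; rewrite !leNgt lqnorm_lt. Qed.

End LqSum.

Lemma mulmxrz (R : pzRingType) m n k (A : 'M[R]_(m, n)) (B : 'M[R]_(n, k)) (z : int) :
  (A *~ z) *m B = (A *m B) *~ z.
Proof. by rewrite -!scaler_int -scalemxAl. Qed.

Section IntegerSpan.
Variable R : realType.

Lemma Zspan_gen d (I : finType) (g : I -> 'rV[R]_d) i : Zspan R d I g (g i).
Proof.
exists (fun j => (j == i)%:Z); rewrite (bigD1 i) //= eqxx big1 ?addr0 // => j.
by move=> /negbTE ->.
Qed.

Lemma Zspan_sum d (I J : finType) (g : I -> 'rV[R]_d) (h : J -> 'rV[R]_d) (c : J -> int) :
  (forall j, Zspan R d I g (h j)) -> Zspan R d I g (\sum_j h j *~ c j).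
Proof.
move=> /fin_all_exists [e he]; exists (fun i => \sum_j e j i * c j).
under eq_bigr => j _ do rewrite he mulrz_suml.
rewrite exchange_big; apply: eq_bigr => i _; rewrite mulrz_sumr.
by apply: eq_bigr => j _; rewrite mulrzA.
Qed.

Lemma eq_Zspan d (I : finType) (g g' : I -> 'rV[R]_d) x :
  g =1 g' -> Zspan R d I g x <-> Zspan R d I g' x.
Proof.
by move=> eq_g; split=> -[c ->]; exists c; apply: eq_bigr => i _; rewrite eq_g.
Qed.

Lemma Zspan_mulmxE d d' (I : finType) (g : I -> 'rV[R]_d) (M : 'M[R]_(d, d')) x :
  Zspan R d' I (fun i => g i *m M) x <-> exists2 y, Zspan R d I g y & x = y *m M.
Proof.
split=> [[c ->]|[y [c ->] ->]].
  exists (\sum_i g i *~ c i); first by exists c.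
  by rewrite mulmx_suml; apply: eq_bigr => i _; rewrite mulmxrz.
by exists c; rewrite mulmx_suml; apply: eq_bigr => i _; rewrite mulmxrz.
Qed.

Lemma Zspan_mulmx d d' (I : finType) (g : I -> 'rV[R]_d) (M : 'M[R]_(d, d')) x :
  injective (fun y : 'rV[R]_d => y *m M) ->
  Zspan R d' I (fun i => g i *m M) (x *m M) <-> Zspan R d I g x.
Proof.
move=> M_inj; rewrite Zspan_mulmxE.
by split=> [[y g_y /M_inj ->] | g_x] //; exists x.
Qed.

Lemma Zspan_coord d (I : finType) (g : I -> 'rV[R]_d) (e : 'I_d) (s : R) x :
  (forall i, exists z : int, g i 0 e = z%:~R * s) ->
  Zspan R d I g x -> exists z : int, x 0 e = z%:~R * s.
Proof.
move=> /fin_all_exists [z gz] [c ->]; exists (\sum_i c i * z i).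
rewrite summxE rmorph_sum mulr_suml; apply: eq_bigr => i _.
by rewrite -scaler_int mxE gz rmorphM mulrA.
Qed.

Lemma lattice_basis_neq0 d k (L : 'rV[R]_d -> Prop) (b : 'I_k -> 'rV[R]_d) j :
  lattice_basis R d k L b -> b j != 0.
Proof.
move=> [b_free _]; apply/eqP => bj0.
have := b_free (fun i => (i == j)%:R); rewrite (bigD1 j) //= eqxx scale1r bj0 add0r.
rewrite big1 => [/(_ erefl j)|i /negbTE ->]; last by rewrite scale0r.
by rewrite eqxx => /eqP; rewrite oner_eq0.
Qed.

Lemma lattice_basis_mulmx d d' k (I : finType) (g : I -> 'rV[R]_d) (M : 'M[R]_(d, d'))
    (b : 'I_k -> 'rV[R]_d) :
  injective (fun y : 'rV[R]_d => y *m M) -> lattice_basis R d k (Zspan R d I g) b ->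
  lattice_basis R d' k (Zspan R d' I (fun i => g i *m M)) (fun j => b j *m M).
Proof.
move=> M_inj [b_free b_span]; split=> [c | x].
  move=> cbM0; apply: b_free; apply: M_inj; rewrite mul0mx -[RHS]cbM0 mulmx_suml.
  by apply: eq_bigr => i _; rewrite scalemxAl.
rewrite !Zspan_mulmxE; split=> -[y y_span ->]; exists y => //; exact/b_span.
Qed.

Lemma lattice_basis_mulmx_preim d d' k (I : finType) (g : I -> 'rV[R]_d) (M : 'M[R]_(d, d'))
    (b : 'I_k -> 'rV[R]_d') :
  injective (fun y : 'rV[R]_d => y *m M) ->
  lattice_basis R d' k (Zspan R d' I (fun i => g i *m M)) b ->
  exists2 y : 'I_k -> 'rV[R]_d,
    (forall j, b j = y j *m M) & lattice_basis R d k (Zspan R d I g) y.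
Proof.
move=> M_inj [b_free b_span].
have /fin_all_exists2 [y _ b_y] : forall j, exists2 y, Zspan R d I g y & b j = y *m M.
  by move=> j; apply/Zspan_mulmxE/b_span/Zspan_gen.
exists y => //; split=> [c cy0 | w].
  apply: b_free; under eq_bigr => i _ do rewrite b_y scalemxAl.
  by rewrite -mulmx_suml cy0 mul0mx.
rewrite -(Zspan_mulmx y w M_inj) -(Zspan_mulmx g w M_inj) -b_span.
by apply: eq_Zspan.
Qed.

End IntegerSpan.

Lemma exists_notin_codom (aT rT : finType) (f : aT -> rT) :
  (#|aT| < #|rT|)%N -> exists y, y \notin codom f.
Proof.
move=> card_lt; apply/existsP; rewrite -negb_forall; apply/negP => /forallP all_in.
have : (#|rT| <= #|aT|)%N.
  rewrite -(size_codom f); apply: leq_trans (card_size _).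
  by apply: subset_leq_card; apply/subsetP => y _; apply: all_in.
by rewrite leqNgt card_lt.
Qed.

Lemma dvdn_of_natr_eq (R : numDomainType) (a b : nat) (z : int) :
  a%:R = z%:~R * b%:R :> R -> (b %| a)%N.
Proof.
move=> ab; have /(congr1 absz) : a%:Z = z * b%:Z by apply: (@intr_inj R); rewrite intrM.
by rewrite abszM /= => ->; apply: dvdn_mull.
Qed.

Section Construction.
Context {R : realType} {m p : nat} {sigma : 'I_m -> nat}.

Local Notation W := (Wvec R m.+1 p).
Local Notation u := (uvec R m sigma).
Local Notation gen := (Lplus_gen R m p sigma).
Local Notation Ltilde eps := (Zspan R (m.+1 + 1) _ (Ltilde_gen R m p sigma eps)).
Local Notation v1 eps := (vvec R m p eps ord0).

Definition tilt_weight (j : 'I_m.+1) : R := if val j == 0%N then 1 else 2.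

Definition tilt (y : 'rV[R]_m.+1) : R := p%:R^-1 * \sum_j tilt_weight j * y 0 j.

Definition tilt_mx (eps : R) : 'M[R]_(m.+1, m.+1 + 1) :=
  row_mx 1%:M (\col_j (eps * tilt_weight j / p%:R)).

Lemma mul_tilt_mx eps y : y *m tilt_mx eps = ext_vec R m.+1 y (eps * tilt y).
Proof.
rewrite mul_mx_row mulmx1; congr row_mx; apply/rowP => k.
rewrite !mxE /tilt !mulr_sumr; apply: eq_bigr => j _; rewrite mxE; ring.
Qed.

Lemma tilt_mx_inj eps : injective (fun y : 'rV[R]_m.+1 => y *m tilt_mx eps).
Proof. by move=> y y'; rewrite /= !mul_tilt_mx => /(congr1 lsubmx); rewrite !row_mxKl. Qed.

Lemma sum_scale_Wvec (a : 'I_m.+1 -> R) : \sum_i a i *: W i = \row_j (a j * p%:R).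
Proof.
apply/rowP => j; rewrite summxE (bigD1 j) //= !mxE eqxx big1 ?addr0 // => i /negbTE ne.
by rewrite !mxE eq_sym ne mulr0.
Qed.

Hypothesis p_gt0 : (0 < p)%N.

Let p_neq0 : p%:R != 0 :> R.
Proof. by rewrite pnatr_eq0 -lt0n. Qed.

Lemma tilt_Wvec i : tilt (W i) = tilt_weight i.
Proof.
rewrite /tilt (bigD1 i) //= !mxE eqxx big1 ?addr0 => [|j /negbTE ne]; first by field.
by rewrite !mxE ne mulr0.
Qed.

Lemma Ltilde_genE eps o : Ltilde_gen R m p sigma eps o = gen o *m tilt_mx eps.
Proof.
have vvecE i : vvec R m p eps i = W i *m tilt_mx eps.
  by rewrite mul_tilt_mx tilt_Wvec mulrC.
case: o => [i|] //=; rewrite /utilde.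
have u_sum : p%:R^-1 *: \sum_i u 0 i *: W i = u.
  by apply/rowP => j; rewrite sum_scale_Wvec !mxE mulrCA mulVf ?mulr1.
rewrite -[in RHS]u_sum -scalemxAl mulmx_suml; congr (_ *: _); apply: eq_bigr => i _.
by rewrite vvecE scalemxAl.
Qed.

Lemma Ltilde_spanE eps x :
  Ltilde eps x <-> Zspan R (m.+1 + 1) _ (fun o => gen o *m tilt_mx eps) x.
Proof. exact/eq_Zspan/Ltilde_genE. Qed.

Definition std_basis (j : 'I_m.+1) : 'rV[R]_m.+1 := if j == ord0 then u else W j.

Lemma std_basis_comb (c : 'I_m.+1 -> R) :
  \sum_j c j *: std_basis j = c ord0 *: u + \row_e ((if e == ord0 then 0 else c e) * p%:R).
Proof.
rewrite (bigD1 ord0) //=; congr (_ + _); rewrite -sum_scale_Wvec big_mkcond.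
by apply: eq_bigr => j _; rewrite /std_basis; case: (j == ord0); rewrite ?scale0r.
Qed.

Lemma Wvec0_std_basis :
  W ord0 = \sum_j std_basis j *~ (if unlift ord0 j is Some k then - (sigma k)%:Z else p%:Z).
Proof.
apply/rowP => e; under eq_bigr => j _ do rewrite -scaler_int.
rewrite std_basis_comb !mxE unlift_none.
case: (unliftP ord0 e) => [k|] ->; last by rewrite eqxx; ring.
by rewrite eq_sym (negbTE (neq_lift _ _)); ring.
Qed.

Lemma std_basis_lattice_basis : lattice_basis R m.+1 m.+1 (Zspan R m.+1 _ gen) std_basis.
Proof.
split=> [c c_comb0 | x].
  move: c_comb0; rewrite std_basis_comb => /rowP c_comb0.
  have c0 : c ord0 = 0 by have := c_comb0 ord0; rewrite !mxE eqxx unlift_none; lra.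
  move=> j; case: (unliftP ord0 j) => [k|] -> //.
  have := c_comb0 (lift ord0 k); rewrite !mxE c0 mul0r add0r eq_sym (negbTE (neq_lift _ _)).
  by move=> /eqP; rewrite mulf_eq0 (negbTE p_neq0) orbF => /eqP.
split=> -[c ->]; apply: Zspan_sum.
  move=> j; rewrite /std_basis; case: (_ == _); first exact: (Zspan_gen gen None).
  exact: (Zspan_gen gen (Some j)).
case=> [i|] /=; last exact: (Zspan_gen _ ord0).
case: (unliftP ord0 i) => [k|] ->; last first.
  by rewrite Wvec0_std_basis; apply: Zspan_sum => j; apply: Zspan_gen.
by have := Zspan_gen std_basis (lift ord0 k); rewrite /std_basis eq_sym (negbTE (neq_lift _ _)).
Qed.

Lemma std_basis_Ltilde_basis eps :
  lattice_basis R (m.+1 + 1) m.+1 (Ltilde eps) (fun j => std_basis j *m tilt_mx eps).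
Proof.
have [b_free b_span] :=
  lattice_basis_mulmx (tilt_mx_inj (eps := eps)) std_basis_lattice_basis.
by split=> // x; rewrite Ltilde_spanE.
Qed.

Lemma tiltN y : tilt (- y) = - tilt y.
Proof.
by rewrite /tilt -mulrN -sumrN; congr (_ * _); apply: eq_bigr => j _; rewrite mxE mulrN.
Qed.

Lemma lqsum_tilt_mx q eps y : lqsum q (y *m tilt_mx eps) = lqsum q y + `|eps * tilt y| ^+ q.
Proof. by rewrite mul_tilt_mx lqsum_ext. Qed.

Definition signed_gen (y : 'rV[R]_m.+1) := exists o, y = gen o \/ y = - gen o.

Context {q : nat}.
Hypothesis q_gt0 : (0 < q)%N.
Hypothesis sigma_pow_sum : (\sum_(j < m) sigma j ^ q)%N = (p ^ q - 1)%N.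

Lemma lqsum_Wvec i : lqsum q (W i) = p%:R ^+ q.
Proof.
rewrite /lqsum (bigD1 i) //= !mxE eqxx big1 ?addr0 ?normr_nat // => j /negbTE ne.
by rewrite !mxE ne normr0 expr0n gtn_eqF.
Qed.

Lemma lqsum_uvec : lqsum q u = p%:R ^+ q.
Proof.
rewrite /lqsum big_ord_recl !mxE unlift_none normr1 expr1n.
under eq_bigr => j _ do rewrite !mxE liftK normr_nat -natrX.
by rewrite -natr_sum sigma_pow_sum natrB ?expn_gt0 ?p_gt0 // natrX addrC subrK.
Qed.

Lemma lqsum_signed_gen y : signed_gen y -> lqsum q y = p%:R ^+ q.
Proof.
by case=> -[i|] [] ->; rewrite ?lqsumN /= ?lqsum_Wvec ?lqsum_uvec.
Qed.

Hypothesis sigma_23 : forall j, sigma j = 2%N \/ sigma j = 3%N.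
Hypothesis n_large_if_q_ge2 : (2 <= q)%N -> (2 * p < 4 * m.+1 - 3)%N.

Lemma tilt_uvec : tilt u = p%:R^-1 * (1 + 2 * (\sum_j sigma j)%:R).
Proof.
rewrite /tilt big_ord_recl natr_sum mulr_sumr !mxE unlift_none mulr1; congr (_ * (_ + _)).
by apply: eq_bigr => j _; rewrite !mxE liftK.
Qed.

Lemma p_le_uvec_weight : (p <= 1 + 2 * \sum_j sigma j)%N.
Proof.
case: q q_gt0 sigma_pow_sum n_large_if_q_ge2 => [|[|q']] // _ pow_sum q_ge2.
  by under eq_bigr => j _ do rewrite -[sigma j]expn1; rewrite pow_sum expn1; lia.
have : (\sum_(j < m) 2 <= \sum_j sigma j)%N by apply: leq_sum => j _; case: (sigma_23 j) => ->.
by rewrite sum_nat_const card_ord; have := q_ge2 isT; lia.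
Qed.

Lemma tilt_uvec_ge1 : 1 <= tilt u.
Proof.
have : p%:R <= (1 + 2 * \sum_j sigma j)%N%:R :> R by rewrite ler_nat p_le_uvec_weight.
rewrite tilt_uvec natrD natrM => p_le.
by rewrite -[X in X <= _](mulVf p_neq0) ler_pM2l ?invr_gt0 ?ltr0n.
Qed.

Lemma tilt_signed_gen_ge1 y : signed_gen y -> 1 <= `|tilt y|.
Proof.
have tilt_u_ge0 := le_trans ler01 tilt_uvec_ge1.
case=> -[i|] [] -> /=; rewrite ?tiltN ?normrN ?tilt_Wvec ?ger0_norm ?tilt_uvec_ge1 //.
all: by rewrite /tilt_weight; case: (_ == _); lra.
Qed.

Context {Rad : R}.
Hypothesis p_lt_Rad : p%:R < Rad.
Hypothesis Lplus_short : forall x, Zspan R m.+1 _ gen x -> lqnorm R q m.+1 x < Rad ->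
  x = 0 \/ (exists i, x = W i \/ x = - W i) \/ x = u \/ x = - u.

Let Rad_ge0 : 0 <= Rad.
Proof. exact: le_trans (ler0n _ p) (ltW p_lt_Rad). Qed.

Lemma Lplus_short_signed_gen y :
  Zspan R m.+1 _ gen y -> y != 0 -> lqsum q y < Rad ^+ q -> signed_gen y.
Proof.
move=> Ly y_neq0; rewrite -(lqnorm_lt q_gt0) // => /(Lplus_short Ly).
case=> [y0 | [[i [] ->] | [] ->]]; first by rewrite y0 eqxx in y_neq0.
- by exists (Some i); left.
- by exists (Some i); right.
- by exists None; left.
- by exists None; right.
Qed.

Lemma lqsum_Lplus_ge y : Zspan R m.+1 _ gen y -> y != 0 -> p%:R ^+ q <= lqsum q y.
Proof.
move=> Ly y_neq0; have [short | long] := ltP (lqsum q y) (Rad ^+ q).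
  by rewrite (lqsum_signed_gen (Lplus_short_signed_gen Ly y_neq0 short)).
by apply: le_trans long; apply: lerXn2r; rewrite ?nnegrE ?ler0n // ltW.
Qed.

Lemma v1_shortest eps x : 0 < eps -> p%:R + eps <= Rad -> Ltilde eps x -> x != 0 ->
  lqnorm R q (m.+1 + 1) (v1 eps) <= lqnorm R q (m.+1 + 1) x.
Proof.
move=> eps_gt0 p_eps_le /Ltilde_spanE /Zspan_mulmxE [y Ly ->] x_neq0.
have y_neq0 : y != 0 by apply: contraNneq x_neq0 => ->; rewrite mul0mx.
have -> : v1 eps = W ord0 *m tilt_mx eps := Ltilde_genE eps (Some ord0).
apply: ler_lqnorm; rewrite !lqsum_tilt_mx lqsum_Wvec tilt_Wvec /tilt_weight /= mulr1.
have [short | long] := ltP (lqsum q y) (Rad ^+ q).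
  have y_gen := Lplus_short_signed_gen Ly y_neq0 short.
  rewrite (lqsum_signed_gen y_gen) lerD2l; apply: lerXn2r; rewrite ?nnegrE // normrM.
  by rewrite ler_peMr ?tilt_signed_gen_ge1.
apply: le_trans (lerXnD q_gt0 (ler0n _ p) (normr_ge0 eps)) _.
apply: le_trans (le_trans long _); last by rewrite lerDl exprn_ge0.
by apply: lerXn2r; rewrite ?nnegrE ?addr_ge0 ?ler0n // gtr0_norm.
Qed.

Hypothesis p_prime : prime p.
Hypothesis p_ge7 : (7 <= p)%N.

(* Such a family uses n of the n + 1 generators.  Omitting u would put every first coordinate
   in pZ, omitting W_k with k >= 2 would put every k-th coordinate in sigma_(k-1) Z. *)
Lemma signed_gen_family_notW0 (y : 'I_m.+1 -> 'rV[R]_m.+1) i0 :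
  (forall w, Zspan R m.+1 _ gen w -> Zspan R m.+1 _ y w) ->
  (forall j, signed_gen (y j)) -> ~ (y i0 = W ord0 \/ y i0 = - W ord0).
Proof.
move=> y_span y_gen y_i0.
have /fin_all_exists [t y_t] : forall j, exists o,
    (j = i0 -> o = Some ord0) /\ (y j = gen o \/ y j = - gen o).
  move=> j; case: (eqVneq j i0) => [->|j_neq]; first by exists (Some ord0).
  by have [o y_o] := y_gen j; exists o; split=> // j_eq; rewrite j_eq eqxx in j_neq.
have [o o_notin] : exists o, o \notin codom t.
  by apply: exists_notin_codom; rewrite card_option !card_ord.
have t_neq j : t j != o by apply: contraNneq o_notin => <-; apply: codom_f.
have coord_mult e s : (forall o', o' != o -> exists z : int, gen o' 0 e = z%:~R * s) ->
    forall w, Zspan R m.+1 _ gen w -> exists z : int, w 0 e = z%:~R * s.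
  move=> gen_mult w /y_span; apply: Zspan_coord => j; have [z gz] := gen_mult _ (t_neq j).
  by case: (proj2 (y_t j)) => ->; [exists z | exists (- z); rewrite mxE gz intrN mulNr].
case: o t_neq coord_mult {o_notin} => [k|] t_neq coord_mult.
  case: (unliftP ord0 k) t_neq coord_mult => [k'|] -> t_neq coord_mult; last first.
    by have := t_neq i0; rewrite (proj1 (y_t i0) erefl) eqxx.
  have [z Wz] : exists z : int, W (lift ord0 k') 0 (lift ord0 k') = z%:~R * (sigma k')%:R.
    apply: coord_mult (Zspan_gen gen (Some _)) => -[i|] gi_neq /=; last first.
      by exists 1; rewrite !mxE liftK mul1r.
    have /negbTE ki_neq : lift ord0 k' != i by apply: contraNneq gi_neq => <-.
    by exists 0; rewrite !mxE ki_neq mul0r.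
  rewrite !mxE eqxx in Wz; have sigma_dvd := dvdn_of_natr_eq Wz.
  by case/primeP: p_prime => _ /(_ _ sigma_dvd) /orP[] /eqP; case: (sigma_23 k'); lia.
have [z uz] : exists z : int, u 0 ord0 = z%:~R * p%:R.
  apply: coord_mult (Zspan_gen gen None) => -[i|] // _.
  by exists (ord0 == i)%:Z; rewrite !mxE; case: (_ == _); rewrite ?mul1r ?mul0r.
rewrite !mxE unlift_none in uz; have := @dvdn_of_natr_eq R 1 p z uz.
by rewrite dvdn1 => /eqP p1; move: p_ge7; rewrite p1.
Qed.

Lemma Ltilde_basis_preim eps b : lattice_basis R (m.+1 + 1) m.+1 (Ltilde eps) b ->
  exists2 y, (forall j, b j = y j *m tilt_mx eps) &
    lattice_basis R m.+1 m.+1 (Zspan R m.+1 _ gen) y.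
Proof.
move=> [b_free b_span]; apply: (lattice_basis_mulmx_preim (tilt_mx_inj (eps := eps))).
by split=> // x; rewrite -Ltilde_spanE.
Qed.

Lemma Ltilde_basis_lqnorm_ge eps b j : lattice_basis R (m.+1 + 1) m.+1 (Ltilde eps) b ->
  p%:R <= lqnorm R q _ (b j).
Proof.
case/Ltilde_basis_preim=> y -> y_basis; rewrite (lqnorm_ge q_gt0) ?ler0n // lqsum_tilt_mx.
apply: le_trans (lqsum_Lplus_ge _ (lattice_basis_neq0 j y_basis)) _.
  by apply/(proj2 y_basis)/Zspan_gen.
by rewrite lerDl exprn_ge0.
Qed.

Lemma Ltilde_basis_v1_long eps b i : lattice_basis R (m.+1 + 1) m.+1 (Ltilde eps) b ->
  b i = v1 eps \/ b i = - v1 eps -> exists j, Rad <= lqnorm R q _ (b j).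
Proof.
case/Ltilde_basis_preim=> y b_y y_basis b_v1.
have y_gen j : Zspan R m.+1 _ gen (y j) by apply/(proj2 y_basis)/Zspan_gen.
have [j long | all_short] := pickP (fun j => Rad ^+ q <= lqsum q (y j)).
  exists j; rewrite b_y (lqnorm_ge q_gt0) // lqsum_tilt_mx (le_trans long) //.
  by rewrite lerDl exprn_ge0.
exfalso; apply: (@signed_gen_family_notW0 y i) => [w /(proj2 y_basis) // | j |].
  apply: Lplus_short_signed_gen (lattice_basis_neq0 j y_basis) _ => //.
  by rewrite ltNge all_short.
have v1E : v1 eps = W ord0 *m tilt_mx eps := Ltilde_genE eps (Some ord0).
by case: b_v1; rewrite b_y v1E -?mulNmx => /(tilt_mx_inj (eps := eps)) ->; [left | right].
Qed.

Lemma Ltilde_basis_v1_cost_ge q' eps b i : lattice_basis R (m.+1 + 1) m.+1 (Ltilde eps) b ->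
  b i = v1 eps \/ b i = - v1 eps -> Rad ^+ q' + p%:R ^+ q' *+ m <= \sum_j lqnorm R q _ (b j) ^+ q'.
Proof.
move=> b_basis b_v1; have [j long] := Ltilde_basis_v1_long b_basis b_v1.
apply: sum_exprn_ge long Rad_ge0; first exact: ler0n.
by move=> k; apply: Ltilde_basis_lqnorm_ge b_basis.
Qed.

Lemma std_basis_cost_lt q' : (0 < q')%N ->
  exists2 eps0, 0 < eps0 & forall eps, 0 < eps -> eps < eps0 ->
  \sum_j lqnorm R q _ (std_basis j *m tilt_mx eps) ^+ q' < Rad ^+ q' + p%:R ^+ q' *+ m.
Proof.
move=> q'_gt0; pose mean := (Rad ^+ q' + p%:R ^+ q' *+ m) / m.+1%:R.
have p_Rad : p%:R ^+ q' < Rad ^+ q' by rewrite ltr_pXn2r ?nnegrE ?ler0n.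
have mean_gt : p%:R ^+ q' < mean by rewrite ltr_pdivlMr ?ltr0n // mulr_natr mulrSr; lra.
have mean_ge0 : 0 <= mean by rewrite (le_trans _ (ltW mean_gt)) ?exprn_ge0.
(* The target is split evenly: each of the m.+1 terms is pushed below [mean]. *)
pose Y := mean `^ q'%:R^-1.
have p_lt_Y : p%:R < Y.
  rewrite -(exprnK_powR q'_gt0 (ler0n _ p)); apply: gt0_ltr_powR;
    by rewrite ?invr_gt0 ?ltr0n ?nnegrE ?exprn_ge0.
pose H := 1 + \sum_k `|tilt (std_basis k)|.
have tilt_le j : `|tilt (std_basis j)| <= H.
  rewrite /H (bigD1 j) //=.
  have : 0 <= \sum_(k | k != j) `|tilt (std_basis k)| by rewrite sumr_ge0.
  lra.
have H_gt0 : 0 < H by rewrite /H ltr_wpDr ?ltr01 ?sumr_ge0.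
have [eps0 eps0_gt0 small] := small_perturbation q_gt0 (ler0n _ p) p_lt_Y H_gt0.
exists eps0 => // eps eps_gt0 eps_lt.
have -> : Rad ^+ q' + p%:R ^+ q' *+ m = \sum_(j < m.+1) mean.
  by rewrite sumr_const card_ord -[in RHS]mulr_natr /mean divfK ?pnatr_eq0.
apply: ltr_sum => [|j _]; first by apply/hasP; exists ord0; rewrite ?mem_index_enum.
rewrite -(powR_invnK q'_gt0 mean_ge0) ltr_pXn2r ?nnegrE ?lqnorm_ge0 ?powR_ge0 //.
rewrite (lqnorm_lt q_gt0) ?powR_ge0 // lqsum_tilt_mx.
have -> : lqsum q (std_basis j) = p%:R ^+ q.
  by rewrite /std_basis; case: (_ == _); rewrite ?lqsum_uvec ?lqsum_Wvec.
exact: small.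
Qed.

End Construction.

Theorem corollary4p8 (R : realType) (q q' p m : nat) (sigma : 'I_m -> nat) (Rad : R) :
  (0 < q)%N -> (0 < q')%N ->
  prime p -> (7 <= p)%N -> (1 <= m)%N ->
  (forall j, sigma j = 2%N \/ sigma j = 3%N) ->
  (\sum_(j < m) sigma j ^ q)%N = (p ^ q - 1)%N ->
  (forall k : int,
      ~~ (p%:Z %| k)%Z -> ~~ (p%:Z %| k - 1)%Z -> ~~ (p%:Z %| k + 1)%Z ->
      lqnorm_modp R q p m (fun j => k * (sigma j)%:Z) >
      lqnorm_modp R q p m (fun j => (sigma j)%:Z)) ->
  ((2 <= q)%N -> (2 * p < 4 * m.+1 - 3)%N) ->
  p%:R < Rad ->
  (forall x : 'rV[R]_m.+1,
      (Zspan R m.+1 (option 'I_m.+1) (Lplus_gen R m p sigma) x /\ lqnorm R q m.+1 x < Rad) <->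
      (x = 0 \/ (exists i, x = Wvec R m.+1 p i \/ x = - Wvec R m.+1 p i)
       \/ x = uvec R m sigma \/ x = - uvec R m sigma)) ->
  exists eps0 : R, 0 < eps0 /\
    forall eps : R, 0 < eps -> eps < eps0 ->
      eps < (Rad - p%:R) / 2 ->
      eps ^+ q < (p%:R ^+ q * (Rad ^+ q - p%:R ^+ q)) /
                 ((m * (p - 1) + 1)%N%:R ^+ q) ->
      let Lt := Zspan R (m.+1 + 1) (option 'I_m.+1) (Ltilde_gen R m p sigma eps) in
      let v1 := vvec R m p eps ord0 in
      (forall x, Lt x -> x != 0 -> lqnorm R q (m.+1 + 1) v1 <= lqnorm R q (m.+1 + 1) x) /\
      (forall b : 'I_m.+1 -> 'rV[R]_(m.+1 + 1),
         lattice_basis R (m.+1 + 1) m.+1 Lt b ->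
         (forall b' : 'I_m.+1 -> 'rV[R]_(m.+1 + 1), lattice_basis R (m.+1 + 1) m.+1 Lt b' ->
            \sum_(i < m.+1) lqnorm R q (m.+1 + 1) (b i) ^+ q' <=
            \sum_(i < m.+1) lqnorm R q (m.+1 + 1) (b' i) ^+ q') ->
         forall i, b i <> v1 /\ b i <> - v1).
Proof.
move=> q_gt0 q'_gt0 p_prime p_ge7 _ sigma_23 sigma_sum _ p_lt_n pR Lplus_short.
have p_gt0 := prime_gt0 p_prime.
have short x Lx x_lt := proj1 (Lplus_short x) (conj Lx x_lt).
have [eps0 eps0_gt0 std_cost] := std_basis_cost_lt p_gt0 q_gt0 sigma_sum pR q'_gt0.
exists eps0; split=> // eps eps_gt0 eps_lt eps_Rad _ Lt v1; split.
  move=> x Lx x_neq0.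
  apply: (v1_shortest p_gt0 q_gt0 sigma_sum sigma_23 p_lt_n pR short eps_gt0 _ Lx x_neq0); lra.
move=> b b_basis b_min i.
suff no_v1 : ~ (b i = v1 \/ b i = - v1) by split=> b_v1; apply: no_v1; [left | right].
move=> b_v1; have cost_ge := Ltilde_basis_v1_cost_ge p_gt0 q_gt0 sigma_sum sigma_23 p_lt_n pR
  short p_prime p_ge7 q' b_basis b_v1.
have := le_lt_trans (le_trans cost_ge (b_min _ (std_basis_Ltilde_basis p_gt0 eps)))
  (std_cost eps eps_gt0 eps_lt).
by rewrite ltxx.
Qed.
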